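(* Fix $0<\epsilon<1/(4L)$ where $L=33$. Let $A\in\mathbb{R}^{m\times n}$ satisfy the RRCP with respect to $G$ with constant $\epsilon$ and each $W_i\in\mathbb{R}^{n_i\times n_{i-1}}$ satisfy the WDC with constant $\epsilon$. Then for all $x,y\in\mathbb{R}^k\setminus\{0\}$, the angle $\theta_1:=\angle(A_{G(x)}G(x),A_{G(y)}G(y))$ is well-defined and $|\cos\theta_1-\cos\varphi(\theta_d)|\leqslant4L\epsilon$, where $\theta_d=\angle(G(x),G(y))$ and $\varphi(\theta):=\cos^{-1}\!\big(\frac{(\pi-2\theta)\cos\theta+2\sin\theta}{\pi}\big)$.
   Context: Network: $k=n_0<\dots<n_d=n$, $G(x)=\mathrm{relu}(W_d\cdots\mathrm{relu}(W_1x)\cdots)$. $W_{+,x}:=\mathrm{diag}(Wx>0)W$. $\theta_{x,y}=\angle(x,y)$, $\hat x=x/\|x\|$, $M_{\hat x\leftrightarrow\hat y}$ the symmetric matrix swapping $\hat x,\hat y$ and vanishing on $\mathrm{span}(x,y)^\perp$ ($\pm\hat x\hat x^\top$ in degenerate cases). WDC with constant $\epsilon$: $\|W_{+,x}^\top W_{+,y}-(\frac{\pi-\theta_{x,y}}{2\pi}I+\frac{\sin\theta_{x,y}}{2\pi}M_{\hat x\leftrightarrow\hat y})\|\leqslant\epsilon$ for all nonzero $x,y$. $A_z:=\mathrm{diag}(\mathrm{sgn}(Az))A$ ($\mathrm{sgn}(0)=0$); $\Phi_{z,w}=\frac{\pi-2\theta_{z,w}}{\pi}I_n+\frac{2\sin\theta_{z,w}}{\pi}M_{\hat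 z\leftrightarrow\hat w}$ for $z,w\neq0$, else $0$. RRCP with constant $\epsilon$: $|\langle(A_{G(x)}^\top A_{G(y)}-\Phi_{G(x),G(y)})(G(x_1)-G(x_2)),G(x_3)-G(x_4)\rangle|\leqslant L\epsilon\|G(x_1)-G(x_2)\|\|G(x_3)-G(x_4)\|$ for all $x,y,x_1,\dots,x_4$, $L=33$. *)

From mathcomp Require Import all_boot all_order all_algebra.
From mathcomp Require Import all_classical all_reals all_analysis.
Set Implicit Arguments. Unset Strict Implicit. Unset Printing Implicit Defensive.
Import Order.TTheory GRing.Theory Num.Theory.
Local Open Scope ring_scope.
Local Open Scope classical_set_scope.

Section Defs.
Variable R : realType.

Definition dotv (p : nat) (u v : 'cV[R]_p) : R := \sum_(i < p) u i 0 * v i 0.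
Definition enorm (p : nat) (u : 'cV[R]_p) : R := Num.sqrt (dotv u u).

Definition opnorm (p q : nat) (M : 'M[R]_(p, q)) : R :=
  sup [set enorm (M *m v) | v in [set v : 'cV[R]_q | enorm v <= 1]].

Definition angle (p : nat) (u v : 'cV[R]_p) : R :=
  acos (dotv u v / (enorm u * enorm v)).

Definition unitv (p : nat) (u : 'cV[R]_p) : 'cV[R]_p := (enorm u)^-1 *: u.

(* M_{\hat x <-> \hat y}: the symmetric matrix swapping \hat x and \hat y and
   vanishing on span(x,y)^perp; in the collinear case it is c * \hat x \hat x^T
   with c = <\hat x, \hat y> = +-1. *)
Definition swapmx (p : nat) (x y : 'cV[R]_p) : 'M[R]_p :=
  let a := unitv x in let b := unitv y in let c := dotv a b in
  if c ^+ 2 == 1 then c *: (a *m a^T)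
  else (1 - c ^+ 2)^-1 *: (a *m b^T + b *m a^T - c *: (a *m a^T + b *m b^T)).

Definition Wplus (p q : nat) (W : 'M[R]_(p, q)) (x : 'cV[R]_q) : 'M[R]_(p, q) :=
  diag_mx (\row_i (if 0 < (W *m x) i 0 then 1 else 0)) *m W.

Definition Asgn (m p : nat) (A : 'M[R]_(m, p)) (z : 'cV[R]_p) : 'M[R]_(m, p) :=
  diag_mx (\row_i Num.sg ((A *m z) i 0)) *m A.

Definition WDC (p q : nat) (W : 'M[R]_(p, q)) (eps : R) : Prop :=
  forall x y : 'cV[R]_q, x != 0 -> y != 0 ->
    opnorm ((Wplus W x)^T *m Wplus W y -
      (((pi - angle x y) / (2 * pi)) *: 1%:M
       + (sin (angle x y) / (2 * pi)) *: swapmx x y)) <= eps.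

Definition Phi (p : nat) (z w : 'cV[R]_p) : 'M[R]_p :=
  if (z != 0) && (w != 0) then
    ((pi - 2 * angle z w) / pi) *: 1%:M + (2 * sin (angle z w) / pi) *: swapmx z w
  else 0.

Definition relu (p : nat) (v : 'cV[R]_p) : 'cV[R]_p := map_mx (fun t => Num.max t 0) v.

(* the network: layer widths dims 0 = k, ..., dims d = n; weights
   W i : 'M_(dims i.+1, dims i) (the paper's W_{i+1}).  netG i x is the output
   after i layers; G = netG d. *)
Fixpoint netG (dims : nat -> nat) (W : forall i, 'M[R]_(dims i.+1, dims i))
    (i : nat) (x : 'cV[R]_(dims 0)) {struct i} : 'cV[R]_(dims i) :=
  match i return 'cV[R]_(dims i) with
  | 0 => x
  | i'.+1 => relu (W i' *m netG W i' x)
  end.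

Definition Lconst : R := 33%:R.

Definition RRCP (k m n : nat) (A : 'M[R]_(m, n)) (G : 'cV[R]_k -> 'cV[R]_n) (eps : R) : Prop :=
  forall x y x1 x2 x3 x4 : 'cV[R]_k,
    `| dotv (((Asgn A (G x))^T *m Asgn A (G y) - Phi (G x) (G y)) *m (G x1 - G x2))
            (G x3 - G x4) |
    <= Lconst * eps * enorm (G x1 - G x2) * enorm (G x3 - G x4).

Definition varphi (t : R) : R := acos (((pi - 2 * t) * cos t + 2 * sin t) / pi).

End Defs.

From mathcomp Require Import all_boot all_order all_algebra.
From mathcomp Require Import all_classical all_reals all_analysis.
From mathcomp Require Import ring lra.
Import Order.TTheory GRing.Theory Num.Theory numFieldNormedType.Exports.
Local Open Scope ring_scope.
Local Open Scope classical_set_scope.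

(* Put [g := G x], [h := G y].  Since [G 0 = 0], the RRCP with [x1 = y], [x3 = x]
   and [x2 = x4 = 0] bounds the distance from [<A_g g, A_h h>] to
   [<Phi_{g,h} h, g> = |g| |h| cos (varphi theta_d)] by [L eps |g| |h|]; for
   [x = y], where [Phi_{g,g}] is the identity, it bounds the distance from
   [|A_g g|^2] to [|g|^2] by [L eps |g|^2].  So numerator and denominator of
   [cos theta_1] are within relative error [L eps] of those of
   [cos (varphi theta_d)], which moves the quotient by at most [4 L eps] when
   [L eps <= 1/2].  The WDC keeps every layer output nonzero, as
   [|W_{+,z} z|^2] is within [eps |z|^2] of [|z|^2 / 2]. *)

Set Implicit Arguments. Unset Strict Implicit.

Section Euclidean.
Variable R : realType.
Implicit Types (p q : nat) (a : R).

Lemma dotvE p (u v : 'cV[R]_p) : dotv u v = (u^T *m v) 0 0.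
Proof. by rewrite /dotv mxE; apply: eq_bigr => i _; rewrite mxE. Qed.

Lemma dotvC p (u v : 'cV[R]_p) : dotv u v = dotv v u.
Proof. by rewrite /dotv; apply: eq_bigr => i _; rewrite mulrC. Qed.

Lemma dotvDl p (u w v : 'cV[R]_p) : dotv (u + w) v = dotv u v + dotv w v.
Proof. by rewrite /dotv -big_split; apply: eq_bigr => i _; rewrite mxE mulrDl. Qed.

Lemma dotvZl p a (u v : 'cV[R]_p) : dotv (a *: u) v = a * dotv u v.
Proof. by rewrite /dotv mulr_sumr; apply: eq_bigr => i _; rewrite mxE mulrA. Qed.

Lemma dotvZr p a (u v : 'cV[R]_p) : dotv u (a *: v) = a * dotv u v.
Proof. by rewrite dotvC dotvZl dotvC. Qed.

Lemma dotvBl p (u w v : 'cV[R]_p) : dotv (u - w) v = dotv u v - dotv w v.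
Proof. by rewrite dotvDl -scaleN1r dotvZl mulN1r. Qed.

Lemma dotvBr p (u w v : 'cV[R]_p) : dotv v (u - w) = dotv v u - dotv v w.
Proof. by rewrite dotvC dotvBl !(dotvC v). Qed.

Lemma dotv0l p (v : 'cV[R]_p) : dotv 0 v = 0.
Proof. by rewrite -(scale0r 0) dotvZl mul0r. Qed.

Lemma dotv_mulmxl p q (M : 'M[R]_(q, p)) (u : 'cV[R]_p) v :
  dotv (M *m u) v = dotv u (M^T *m v).
Proof. by rewrite !dotvE trmx_mul mulmxA. Qed.

Lemma dotvv_ge0 p (u : 'cV[R]_p) : 0 <= dotv u u.
Proof. by apply: sumr_ge0 => i _; rewrite -expr2 sqr_ge0. Qed.

Lemma dotvv_gt0 p (u : 'cV[R]_p) : u != 0 -> 0 < dotv u u.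
Proof.
move=> u0; rewrite lt_def dotvv_ge0 andbT; apply: contra u0 => /eqP.
rewrite /dotv => /eqP; rewrite psumr_eq0 => [/allP uu0|i _]; last first.
  by rewrite -expr2 sqr_ge0.
apply/eqP/matrixP => i j; rewrite (ord1 j) mxE.
by move: (uu0 i (mem_index_enum i)); rewrite implyTb -expr2 sqrf_eq0 => /eqP.
Qed.

Lemma enorm_ge0 p (u : 'cV[R]_p) : 0 <= enorm u.
Proof. exact: sqrtr_ge0. Qed.

Lemma enorm_sqr p (u : 'cV[R]_p) : enorm u ^+ 2 = dotv u u.
Proof. by rewrite /enorm sqr_sqrtr // dotvv_ge0. Qed.

Lemma enorm_gt0 p (u : 'cV[R]_p) : u != 0 -> 0 < enorm u.
Proof. by move=> /dotvv_gt0; rewrite /enorm sqrtr_gt0. Qed.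

Lemma enorm0 p : enorm (0 : 'cV[R]_p) = 0.
Proof. by rewrite /enorm dotv0l sqrtr0. Qed.

Lemma enorm_eq0 p (u : 'cV[R]_p) : (enorm u == 0) = (u == 0).
Proof.
apply/eqP/eqP => [|->]; last exact: enorm0.
by apply: contra_eq => /enorm_gt0/gt_eqF/negbT.
Qed.

Lemma enormZ p a (u : 'cV[R]_p) : enorm (a *: u) = `|a| * enorm u.
Proof.
by rewrite /enorm dotvZl dotvZr mulrA -expr2 sqrtrM ?sqr_ge0 // sqrtr_sqr.
Qed.

Lemma dotv_sqr_le p (u v : 'cV[R]_p) : dotv u v ^+ 2 <= dotv u u * dotv v v.
Proof.
have [->|v0] := eqVneq v 0; first by rewrite dotvC !dotv0l expr0n mulr0.
have vv_gt0 := dotvv_gt0 v0.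
have := dotvv_ge0 (dotv v v *: u - dotv u v *: v).
rewrite dotvBl !dotvBr !dotvZl !dotvZr (dotvC v u) => ge0.
rewrite -subr_ge0 -(pmulr_rge0 _ vv_gt0).
by move: ge0; congr (_ <= _); ring.
Qed.

Lemma normr_dotv_le p (u v : 'cV[R]_p) : `|dotv u v| <= enorm u * enorm v.
Proof.
rewrite -ler_sqr ?nnegrE ?mulr_ge0 ?enorm_ge0 //.
by rewrite real_normK ?num_real // exprMn !enorm_sqr dotv_sqr_le.
Qed.

Lemma cos_angle_arg_bound p (u v : 'cV[R]_p) : u != 0 -> v != 0 ->
  -1 <= dotv u v / (enorm u * enorm v) <= 1.
Proof.
move=> u0 v0; have uv_gt0 := mulr_gt0 (enorm_gt0 u0) (enorm_gt0 v0).
rewrite -ler_norml normrM normfV (gtr0_norm uv_gt0) ler_pdivrMr // mul1r.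
exact: normr_dotv_le.
Qed.

Lemma cos_angle p (u v : 'cV[R]_p) : u != 0 -> v != 0 ->
  cos (angle u v) = dotv u v / (enorm u * enorm v).
Proof. by move=> u0 v0; rewrite /angle acosK // in_itv /= cos_angle_arg_bound. Qed.

Lemma angle_in0pi p (u v : 'cV[R]_p) : u != 0 -> v != 0 -> 0 <= angle u v <= pi.
Proof.
by move=> u0 v0; rewrite /angle acos_ge0 ?acos_lepi // cos_angle_arg_bound.
Qed.

Lemma anglexx p (u : 'cV[R]_p) : u != 0 -> angle u u = 0.
Proof.
move=> u0; rewrite /angle -expr2 enorm_sqr divff ?acos1 //.
by rewrite gt_eqF // dotvv_gt0.
Qed.

Lemma unitv_dotvv p (u : 'cV[R]_p) : u != 0 -> dotv (unitv u) (unitv u) = 1.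
Proof.
move=> u0; rewrite /unitv dotvZl dotvZr -enorm_sqr.
by field; rewrite enorm_eq0.
Qed.

Lemma scale_enorm_unitv p (u : 'cV[R]_p) : u != 0 -> enorm u *: unitv u = u.
Proof. by move=> u0; rewrite /unitv scalerA divff ?scale1r // enorm_eq0. Qed.

Lemma mulmx_outer p (a b c : 'cV[R]_p) : (a *m b^T) *m c = dotv b c *: a.
Proof. by rewrite -mulmxA [b^T *m c]mx11_scalar -dotvE mul_mx_scalar. Qed.

End Euclidean.

Section Operators.
Variable R : realType.
Implicit Types (p q : nat) (e : R).

Lemma has_sup_opnorm p q (M : 'M[R]_(p, q)) :
  has_sup [set enorm (M *m v) | v in [set v : 'cV[R]_q | enorm v <= 1]].
Proof.
split; first by exists (enorm (M *m 0)), 0 => //=; rewrite enorm0.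
exists (Num.sqrt (\sum_i dotv (\col_j M i j) (\col_j M i j))) => _ [v /= v1 <-].
rewrite /enorm ler_sqrt; last by apply: sumr_ge0 => i _; exact: dotvv_ge0.
have vv1 : dotv v v <= 1 by rewrite -enorm_sqr; have := enorm_ge0 v; nra.
rewrite [leLHS]/dotv; apply: ler_sum => i _.
have -> : (M *m v) i 0 = dotv (\col_j M i j) v.
  by rewrite mxE /dotv; apply: eq_bigr => j _; rewrite mxE.
rewrite -expr2; apply: le_trans (dotv_sqr_le _ _) _.
by rewrite ler_piMr // dotvv_ge0.
Qed.

Lemma enorm_mulmx_le p q (M : 'M[R]_(p, q)) e v :
  opnorm M <= e -> enorm (M *m v) <= e * enorm v.
Proof.
move=> Me; have [->|v0] := eqVneq v 0; first by rewrite mulmx0 !enorm0 mulr0.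
have v_gt0 := enorm_gt0 v0.
have : enorm (M *m ((enorm v)^-1 *: v)) <= opnorm M.
  apply: sup_upper_bound; first exact: has_sup_opnorm.
  exists ((enorm v)^-1 *: v) => //=.
  by rewrite enormZ normfV gtr0_norm // mulVf // gt_eqF.
move=> /le_trans /(_ Me).
by rewrite -scalemxAr enormZ normfV gtr0_norm // mulrC ler_pdivrMr.
Qed.

Lemma normr_dotv_mulmx_le p (M : 'M[R]_p) e v :
  opnorm M <= e -> `|dotv (M *m v) v| <= e * enorm v ^+ 2.
Proof.
move=> Me; apply: le_trans (normr_dotv_le _ _) _.
by rewrite expr2 mulrA ler_wpM2r ?enorm_ge0 ?enorm_mulmx_le.
Qed.

Lemma swapmx_unitv p (x y : 'cV[R]_p) : x != 0 -> y != 0 ->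
  swapmx x y *m unitv y = unitv x.
Proof.
move=> x0 y0; rewrite /swapmx.
set a := unitv x; set b := unitv y; set c := dotv a b.
have bb1 : dotv b b = 1 by exact: unitv_dotvv.
case: ifP => [/eqP c2_1|/negbT c2_neq1].
  by rewrite -scalemxAl mulmx_outer -/c scalerA -expr2 c2_1 scale1r.
have c2_neq0 : 1 - c ^+ 2 != 0 by rewrite subr_eq0 eq_sym.
rewrite -scalemxAl (mulmxBl (a *m b^T + b *m a^T)) (mulmxDl (a *m b^T)).
rewrite -(scalemxAl c) (mulmxDl (a *m a^T)) !mulmx_outer bb1 -/c.
clearbody a b c; apply/matrixP => i j; rewrite !mxE.
by field.
Qed.

End Operators.

Section Varphi.
Variable R : realType.
Implicit Types t : R.

Definition varphi_cos t : R := ((pi - 2 * t) * cos t + 2 * sin t) / pi.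

Lemma sin_le_id t : 0 <= t -> sin t <= t.
Proof.
move=> t0.
have [c _] : exists2 c, c \in `[0, t]%R & sin t - sin 0 = cos c * (t - 0).
  apply: (MVT_segment (f := sin) (df := cos) t0).
  exact/continuous_subspaceT/continuous_sin.
by rewrite sin0 !subr0 => ->; rewrite ler_piMl // cos_le1.
Qed.

Lemma sin_piB t : sin (pi - t) = sin t.
Proof. by rewrite sinB sinpi cospi mul0r sub0r mulN1r opprK. Qed.

Lemma varphi_cos_bound t : 0 <= t <= pi -> -1 <= varphi_cos t <= 1.
Proof.
move=> /andP[t0 tpi]; have pi_gt0 := pi_gt0 R.
have sin_ge0 : 0 <= sin t by apply: sin_ge0_pi; rewrite t0 tpi.
have sin_le_t : sin t <= t := sin_le_id t0.
have sin_le_pit : sin t <= pi - t by rewrite -sin_piB sin_le_id // subr_ge0.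
have cos1 := cos_le1 t; have cosN1 := cos_geN1 t.
(* On each half of [0, pi] the sine term is bounded by the slack that
   [|pi - 2 t| * |cos t| <= |pi - 2 t|] leaves, using [sin t <= min t (pi - t)]. *)
rewrite /varphi_cos ler_pdivlMr // ler_pdivrMr //.
have [tpi2|tpi2] := lerP t (pi / 2).
- have h1 : 0 <= (pi - 2 * t) * (1 - cos t) by apply: mulr_ge0; lra.
  have h2 : 0 <= (pi - 2 * t) * (1 + cos t) by apply: mulr_ge0; lra.
  apply/andP; split; nra.
- have h1 : 0 <= (2 * t - pi) * (1 - cos t) by apply: mulr_ge0; lra.
  have h2 : 0 <= (2 * t - pi) * (1 + cos t) by apply: mulr_ge0; lra.
  apply/andP; split; nra.
Qed.

Lemma varphi_cos0 : varphi_cos (0 : R) = 1.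
Proof.
rewrite /varphi_cos mulr0 subr0 cos0 sin0 mulr0 mulr1 addr0 divff //.
by rewrite gt_eqF // pi_gt0.
Qed.

Lemma cos_varphi t : 0 <= t <= pi -> cos (varphi t) = varphi_cos t.
Proof. by move=> t0pi; rewrite /varphi acosK // in_itv /= varphi_cos_bound. Qed.

Lemma dotv_Phi p (x y : 'cV[R]_p) : x != 0 -> y != 0 ->
  dotv (Phi x y *m y) x = varphi_cos (angle x y) * (enorm x * enorm y).
Proof.
move=> x0 y0; rewrite /Phi x0 y0 /=.
have swap_y : swapmx x y *m y = enorm y *: unitv x.
  by rewrite -(swapmx_unitv x0 y0) scalemxAr scale_enorm_unitv.
rewrite mulmxDl -!scalemxAl mul1mx swap_y dotvDl !dotvZl (dotvC y x).
rewrite -enorm_sqr.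
have -> : dotv x y = cos (angle x y) * (enorm x * enorm y).
  by rewrite cos_angle // divfK // mulf_neq0 // enorm_eq0.
have x_neq0 : enorm x != 0 by rewrite enorm_eq0.
have pi_neq0 : pi != 0 :> R by rewrite gt_eqF // pi_gt0.
rewrite /varphi_cos; move: (pi : R) pi_neq0 => P P_neq0.
by field; rewrite P_neq0 x_neq0.
Qed.

End Varphi.

Section Perturbation.
Variable R : realType.

Lemma dist_mul_le (a b U V dl : R) :
  0 <= a -> 0 <= b -> 0 <= U -> 0 <= V -> 0 <= dl <= 1 ->
  `|U ^+ 2 - a ^+ 2| <= dl * a ^+ 2 -> `|V ^+ 2 - b ^+ 2| <= dl * b ^+ 2 ->
  `|U * V - a * b| <= dl * (a * b).
Proof.
move=> a0 b0 U0 V0 /andP[dl0 dl1].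
rewrite !ler_norml => /andP[Ua_lo Ua_hi] /andP[Vb_lo Vb_hi].
have lo : (1 - dl) * (a * b) <= U * V.
  rewrite -ler_sqr ?nnegrE ?mulr_ge0 ?subr_ge0 //.
  have -> : ((1 - dl) * (a * b)) ^+ 2 = ((1 - dl) * a ^+ 2) * ((1 - dl) * b ^+ 2).
    by ring.
  by rewrite exprMn; apply: ler_pM; rewrite ?mulr_ge0 ?subr_ge0 ?sqr_ge0 //; lra.
have hi : U * V <= (1 + dl) * (a * b).
  rewrite -ler_sqr ?nnegrE ?mulr_ge0 ?addr_ge0 //.
  have -> : ((1 + dl) * (a * b)) ^+ 2 = ((1 + dl) * a ^+ 2) * ((1 + dl) * b ^+ 2).
    by ring.
  by rewrite exprMn; apply: ler_pM; rewrite ?sqr_ge0 //; lra.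
by apply/andP; split; lra.
Qed.

Lemma dist_ratio_le (p q r c dl : R) :
  0 < r -> 0 <= dl <= 1 / 2 -> `|c| <= 1 ->
  `|q - r| <= dl * r -> `|p - c * r| <= dl * r ->
  0 < q /\ `|p / q - c| <= 4 * dl.
Proof.
move=> r0 /andP[dl0 dl2] c1 qr pr.
have dlr : dl * r <= 1 / 2 * r by rewrite ler_wpM2r // ltW.
have q_lo : r / 2 <= q by move: qr; rewrite ler_norml => /andP[]; lra.
have q0 : 0 < q by lra.
split => //.
have num : `|p - c * q| <= 2 * dl * r.
  have -> : p - c * q = (p - c * r) + c * (r - q) by ring.
  apply: le_trans (ler_normD _ _) _; rewrite normrM (distrC r).
  have : `|c| * `|q - r| <= 1 * (dl * r) by apply: ler_pM.
  lra.
have -> : p / q - c = (p - c * q) / q by field; rewrite gt_eqF.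
rewrite normrM normfV (gtr0_norm q0) ler_pdivrMr //.
have : 0 <= dl * (q - r / 2) by apply: mulr_ge0; lra.
lra.
Qed.

Lemma cos_angle_perturb p (u v : 'cV[R]_p) (a b c dl : R) :
  0 < a -> 0 < b -> 0 <= dl <= 1 / 2 -> `|c| <= 1 ->
  `|enorm u ^+ 2 - a ^+ 2| <= dl * a ^+ 2 ->
  `|enorm v ^+ 2 - b ^+ 2| <= dl * b ^+ 2 ->
  `|dotv u v - c * (a * b)| <= dl * (a * b) ->
  [/\ u != 0, v != 0 & `|cos (angle u v) - c| <= 4 * dl].
Proof.
move=> a0 b0 dl_bd c1 ua vb uv.
have dl1 : 0 <= dl <= 1 by case/andP: dl_bd => *; apply/andP; split; lra.
have uv_near := dist_mul_le (ltW a0) (ltW b0) (enorm_ge0 u) (enorm_ge0 v) dl1 ua vb.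
have [uv_gt0 cos_near] := dist_ratio_le (mulr_gt0 a0 b0) dl_bd c1 uv_near uv.
have : enorm u * enorm v != 0 by rewrite gt_eqF.
rewrite mulf_eq0 negb_or !enorm_eq0 => /andP[u0 v0].
by split => //; rewrite cos_angle.
Qed.

End Perturbation.

Section Network.
Variable R : realType.

Lemma relu_Wplus p q (W : 'M[R]_(p, q)) x : relu (W *m x) = Wplus W x *m x.
Proof.
rewrite /Wplus -mulmxA mul_diag_mx; apply/matrixP => i j; rewrite (ord1 j) !mxE.
case: ifP => [Wx_gt0|/negbT Wx_le0]; first by rewrite mul1r max_l // ltW.
by rewrite mul0r max_r // leNgt.
Qed.

Lemma WDC_enorm_sqr p q (W : 'M[R]_(p, q)) eps z : WDC W eps -> z != 0 ->
  `|enorm (Wplus W z *m z) ^+ 2 - enorm z ^+ 2 / 2| <= eps * enorm z ^+ 2.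
Proof.
move=> hW z0; have := normr_dotv_mulmx_le z (hW z z z0 z0).
have pi_neq0 : pi != 0 :> R by rewrite gt_eqF // pi_gt0.
have half : pi / (2 * pi) = 2^-1 :> R by move: (pi : R) pi_neq0 => P ?; field.
rewrite anglexx // sin0 mul0r scale0r addr0 subr0 half mulmxBl dotvBl -mulmxA.
rewrite (dotv_mulmxl (Wplus W z)^T) trmxK -scalemxAl mul1mx dotvZl !enorm_sqr.
by rewrite mulrC.
Qed.

Lemma Wplus_mul_neq0 p q (W : 'M[R]_(p, q)) eps z :
  WDC W eps -> eps < 1 / 2 -> z != 0 -> Wplus W z *m z != 0.
Proof.
move=> hW eps_lt z0; have := WDC_enorm_sqr hW z0.
have zz_gt0 := exprn_gt0 2 (enorm_gt0 z0).
rewrite -enorm_eq0; apply: contraTneq => ->.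
rewrite expr0n sub0r normrN ger0_norm -?ltNge; nra.
Qed.

Lemma netG0 (dims : nat -> nat) (W : forall i, 'M[R]_(dims i.+1, dims i)) i :
  netG W i 0 = 0.
Proof.
elim: i => //= i ->; rewrite mulmx0; apply/matrixP => a b; rewrite !mxE.
by rewrite maxxx.
Qed.

Lemma netG_neq0 (d : nat) (dims : nat -> nat)
    (W : forall i, 'M[R]_(dims i.+1, dims i)) eps x :
  (forall i, (i < d)%N -> WDC (W i) eps) -> eps < 1 / 2 -> x != 0 ->
  forall i, (i <= d)%N -> netG W i x != 0.
Proof.
move=> hW eps_lt x0; elim => //= i IH id.
by rewrite relu_Wplus; apply: (Wplus_mul_neq0 (hW i id) eps_lt); apply/IH/ltnW.
Qed.

End Network.

Section RRCP.
Variables (R : realType) (k m n : nat) (A : 'M[R]_(m, n)).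
Variables (G : 'cV[R]_k -> 'cV[R]_n) (eps : R).
Hypotheses (G0 : G 0 = 0) (hA : RRCP A G eps).

Lemma RRCP_dotv x y : G x != 0 -> G y != 0 ->
  `|dotv (Asgn A (G x) *m G x) (Asgn A (G y) *m G y)
    - varphi_cos (angle (G x) (G y)) * (enorm (G x) * enorm (G y))|
  <= Lconst R * eps * (enorm (G x) * enorm (G y)).
Proof.
move=> gx gy; have := hA x y y 0 x 0.
rewrite G0 !subr0 mulmxBl dotvBl dotv_Phi // -mulmxA.
by rewrite (dotv_mulmxl (Asgn A (G x))^T) trmxK dotvC -mulrA (mulrC (enorm (G y))).
Qed.

Lemma RRCP_enorm_sqr z : G z != 0 ->
  `|enorm (Asgn A (G z) *m G z) ^+ 2 - enorm (G z) ^+ 2|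
  <= Lconst R * eps * enorm (G z) ^+ 2.
Proof.
move=> gz; have := RRCP_dotv gz gz.
by rewrite anglexx // varphi_cos0 mul1r -enorm_sqr -expr2.
Qed.

End RRCP.

Unset Implicit Arguments.
Set Strict Implicit.

Theorem lemma15 (R : realType) (eps : R) (d m : nat) (dims : nat -> nat)
    (W : forall i, 'M[R]_(dims i.+1, dims i)) (A : 'M[R]_(m, dims d)) :
  0 < eps -> eps < 1 / (4 * Lconst R) ->
  (forall i, (i < d)%N -> (dims i < dims i.+1)%N) ->
  (forall i, (i < d)%N -> WDC (W i) eps) ->
  RRCP A (netG W d) eps ->
  forall x y : 'cV[R]_(dims 0), x != 0 -> y != 0 ->
    let Gx := netG W d x in let Gy := netG W d y in
    Asgn A Gx *m Gx != 0 /\ Asgn A Gy *m Gy != 0 /\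
    `| cos (angle (Asgn A Gx *m Gx) (Asgn A Gy *m Gy)) - cos (varphi (angle Gx Gy)) |
      <= 4 * Lconst R * eps.
Proof.
move=> eps_gt0 eps_lt _ hW hA x y x0 y0 Gx Gy.
have L33 : Lconst R = 33 by [].
have dl_bd : 0 <= Lconst R * eps <= 1 / 2.
  by move: eps_lt; rewrite L33 ltr_pdivlMr // => ?; apply/andP; split; lra.
have eps_lt2 : eps < 1 / 2 by move: eps_lt; rewrite L33 ltr_pdivlMr // => ?; lra.
have G0 : netG W d 0 = 0 := netG0 W d.
have gx : Gx != 0 := netG_neq0 hW eps_lt2 x0 (leqnn d).
have gy : Gy != 0 := netG_neq0 hW eps_lt2 y0 (leqnn d).
have angle_bd := angle_in0pi gx gy.
have c1 : `|varphi_cos (angle Gx Gy)| <= 1 by rewrite ler_norml varphi_cos_bound.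
have [u0 v0 cos_near] := cos_angle_perturb (enorm_gt0 gx) (enorm_gt0 gy) dl_bd c1
  (RRCP_enorm_sqr G0 hA gx) (RRCP_enorm_sqr G0 hA gy) (RRCP_dotv G0 hA gx gy).
by split => //; split => //; rewrite cos_varphi // -mulrA.
Qed.
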